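(* Let $B_n=\{2\}\cup\{j \text{ odd}: 3\le j\le n-2\}$. There is a constant $C>0$ such that $|D_X(B_n)|\ge C\left(\sqrt{2+2\sqrt2}\right)^n$ for all sufficiently large $n$.
   Context: For $A\subseteq[n]$, $D_X(A)$ is the set of all linear orders $q$ on $[n]$ such that for every triple $i<j<k$ in $[n]$: if $j\in A$ then $i$ is not ranked last among $\{i,j,k\}$ in $q$, and if $j\notin A$ then $k$ is not ranked first among $\{i,j,k\}$ in $q$. ($B_n$ equals $\{2,3,5,\dots,n-3+(n\bmod 2)\}$, the ''odd $1N33N1$-alternating scheme''.) *)

From mathcomp Require Import all_boot all_order all_fingroup all_algebra.
Set Implicit Arguments. Unset Strict Implicit. Unset Printing Implicit Defensive.

(* Conventions: [n] = {1,...,n} is represented by 'I_n, the element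
   x : 'I_n standing for the integer x+1.  A linear order q on [n] is
   represented by the permutation q : {perm 'I_n} giving the position of each
   element (q x < q y  means x is ranked before y; "first" = smallest
   position, "last" = largest position). *)

Definition ranked_last n (q : {perm 'I_n}) (x y z : 'I_n) : bool :=
  (q y < q x) && (q z < q x).

Definition ranked_first n (q : {perm 'I_n}) (x y z : 'I_n) : bool :=
  (q x < q y) && (q x < q z).

Definition D_X n (A : {set 'I_n}) : {set {perm 'I_n}} :=
  [set q : {perm 'I_n} | [forall i : 'I_n, forall j : 'I_n, forall k : 'I_n,
     ((i < j) && (j < k)) ==>
       (if j \in A then ~~ ranked_last q i j k else ~~ ranked_first q k i j)]].

Definition B n : {set 'I_n} :=
  [set x : 'I_n | (x.+1 == 2) || [&& odd x.+1, 3 <= x.+1 & x.+1 <= n - 2]].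

From mathcomp Require Import all_boot all_order all_fingroup all_algebra.
From mathcomp Require Import zify ring lra.
Import Order.TTheory GRing.Theory Num.Theory.

(* Write a linear order as the word listing its elements from first to last,
   and grow words from [1, 2] by inserting 3, 4, ... one at a time, each as the
   new maximum.  What matters is how many of the last gaps of the word can still
   receive the next maximum without creating a forbidden triple.  Inserting an
   element of B at the very end opens one more such gap; inserting the next
   element, which is not in B, t gaps from the end leaves max(t, 1) of them.
   Alternating the two kinds of insertion yields ext_count k L words after k
   pairs of insertions from L open gaps, where
     ext_count (k+1) (L+1) = ext_count (k+1) L + ext_count k 1 + ext_count k (L+2).
   Hence a_k = ext_count k 1 satisfies a_(k+2) >= 4 a_(k+1) + 4 a_k - 4^(k+1),
   so a_k - 4^k grows like lam^k, lam = 2 + 2 sqrt 2 being the positive root of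
   lam^2 = 4 lam + 4; as n <= 2k + 4, this is a constant times sqrt(lam)^n. *)

(** * Words and insertion of a new maximum *)

Lemma index_insert (T : eqType) (s : seq T) p x y : p <= size s -> x != y ->
  index x (take p s ++ y :: drop p s) = bump p (index x s).
Proof.
move=> + /negbTE xy; rewrite eq_sym in xy.
elim: s p => [|z s IH] [|p] //=; rewrite ?xy // ltnS => le_ps.
by case: (z == x) => //; rewrite IH // bumpS.
Qed.

Lemma index_insert_new (T : eqType) (s : seq T) p y : p <= size s -> y \notin s ->
  index y (take p s ++ y :: drop p s) = p.
Proof.
move=> le_ps /negbTE ys; rewrite index_cat (contraFF (@mem_take _ _ _ _) ys).
by rewrite size_takel //= eqxx addn0.
Qed.

Lemma ltn_bump2 h i j : (bump h i < bump h j) = (i < j).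
Proof. by rewrite !ltnNge leq_bump2. Qed.

Lemma ltn_bump h i : (h < bump h i) = (h <= i).
Proof. by rewrite /bump; case: leqP => /=; lia. Qed.

(* A word [w] is an order on {0, ..., size w - 1}; the rank of [x] is [index x w]. *)
Definition arrangement (w : seq nat) : bool := perm_eq w (iota 0 (size w)).

Definition insert_max (t : nat) (w : seq nat) : seq nat :=
  take (size w - t) w ++ size w :: drop (size w - t) w.

Lemma size_insert_max t w : size (insert_max t w) = (size w).+1.
Proof. by rewrite /insert_max size_cat /= addnS -size_cat cat_take_drop. Qed.

Section Arrangements.

Context {w : seq nat} (arr_w : arrangement w).

Lemma mem_arrangement x : (x \in w) = (x < size w).
Proof. by rewrite (perm_mem arr_w) mem_iota. Qed.

Lemma arrangement_uniq : uniq w.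
Proof. by rewrite (perm_uniq arr_w) iota_uniq. Qed.

Lemma index_arrangement_lt x : (index x w < size w) = (x < size w).
Proof. by rewrite index_mem mem_arrangement. Qed.

Lemma index_out x : size w <= x -> index x w = size w.
Proof. by move=> le_wx; rewrite memNindex // mem_arrangement -leqNgt. Qed.

Lemma arrangement_insert_max t : arrangement (insert_max t w).
Proof.
rewrite /arrangement size_insert_max /insert_max.
rewrite -addn1 iotaD add0n -(cat_take_drop (size w - t) w) -cat1s perm_catCA.
by rewrite perm_catC perm_cat2r !cat_take_drop.
Qed.

Lemma mem_insert_max t x : (x \in insert_max t w) = (x \in w) || (x == size w).
Proof. by rewrite mem_cat in_cons orbCA -mem_cat cat_take_drop orbC. Qed.

Lemma index_insert_max t x : x != size w ->
  index x (insert_max t w) = bump (size w - t) (index x w).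
Proof. by move=> xw; rewrite index_insert ?leq_subr. Qed.

Lemma index_insert_max_new t : index (size w) (insert_max t w) = size w - t.
Proof. by rewrite index_insert_new ?leq_subr ?mem_arrangement ?ltnn. Qed.

Lemma filter_arrangement : [seq x <- w | x < size w] = w.
Proof. by apply/all_filterP/allP => x; rewrite mem_arrangement. Qed.

Lemma filter_insert_max t : [seq x <- insert_max t w | x < size w] = w.
Proof. by rewrite filter_cat /= ltnn -filter_cat cat_take_drop filter_arrangement. Qed.

Lemma insert_max_inj t1 t2 : t1 <= size w -> t2 <= size w ->
  insert_max t1 w = insert_max t2 w -> t1 = t2.
Proof.
move=> le1 le2 /(congr1 (index (size w))).
rewrite !index_insert_max_new; lia.
Qed.

End Arrangements.

Lemma insert_max_injr {t w1 w2} : arrangement w1 -> arrangement w2 ->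
  insert_max t w1 = insert_max t w2 -> w1 = w2.
Proof.
move=> arr1 arr2 eq12; have /eqP := congr1 size eq12.
rewrite !size_insert_max eqSS => /eqP size12.
by rewrite -(filter_insert_max arr1 t) eq12 size12 filter_insert_max.
Qed.

Lemma filter_ltn_filter {m n} (s : seq nat) : m <= n ->
  [seq x <- [seq x <- s | x < n] | x < m] = [seq x <- s | x < m].
Proof.
move=> le_mn; rewrite -filter_predI; apply: eq_filter => x /=.
by apply/andb_idr => /leq_trans; apply.
Qed.

Section Validity.

Variable a : nat -> bool.

Definition valid_word (w : seq nat) : Prop :=
  forall i j k, i < j -> j < k -> k < size w ->
    if a j then ~~ ((index j w < index i w) && (index k w < index i w))
    else ~~ ((index k w < index i w) && (index k w < index j w)).

(* The new maximum may go into any of the last [t + 1] gaps of [w] (see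
   [valid_insert_max]): the clauses exclude the triples (i, j, max) that such an
   insertion would make forbidden. *)
Definition tail_free (w : seq nat) (t : nat) : Prop :=
  forall i, i \in w -> size w - t <= index i w ->
    (forall j, i < j -> index j w < index i w -> ~~ a j) /\
    (forall j, j \in w -> size w - t <= index j w -> i < j -> a j).

Context {w : seq nat} (arr_w : arrangement w).

Lemma tail_free0 : tail_free w 0.
Proof. by move=> i iw; rewrite subn0 leqNgt index_mem iw. Qed.

Lemma tail_free_le {t t'} : t' <= t -> tail_free w t -> tail_free w t'.
Proof.
move=> le_t free_t i iw /(leq_trans (leq_sub2l _ le_t)) /(free_t i iw) [no_a all_a].
by split=> // j jw /(leq_trans (leq_sub2l _ le_t)); apply: all_a.
Qed.

Lemma valid_insert_max {t} : valid_word w -> tail_free w t -> t <= size w ->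
  valid_word (insert_max t w).
Proof.
move=> valid_w free_w le_tw i j k ij jk; rewrite size_insert_max ltnS => le_kw.
have old_index x : x < size w -> index x (insert_max t w) = bump (size w - t) (index x w).
  by move=> xw; rewrite index_insert_max // neq_ltn xw.
have [iw jw] : i < size w /\ j < size w by lia.
rewrite (old_index i iw) (old_index j jw).
have [kw | ->] : k < size w \/ k = size w by lia.
  by rewrite old_index // !ltn_bump2; apply: valid_w.
rewrite index_insert_max_new // !ltn_bump.
have [i_in j_in] : i \in w /\ j \in w by rewrite !mem_arrangement.
case: ifP => a_j; apply/negP => /andP [h1 h2].
  rewrite ltn_bump2 in h1.
  by have [/(_ j ij h1)] := free_w i i_in h2; rewrite a_j.
by have [_ /(_ j j_in h2 ij)] := free_w i i_in h1; rewrite a_j.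
Qed.

Lemma tail_free_insert_in {L} : a (size w) -> tail_free w L -> L <= size w ->
  tail_free (insert_max 0 w) L.+1.
Proof.
move=> a_max free_w le_Lw i; rewrite size_insert_max subSS.
have arr' := arrangement_insert_max arr_w 0.
have old_index x : x \in w -> index x (insert_max 0 w) = index x w.
  move=> xw; rewrite index_insert_max; last by rewrite ltn_eqF // -mem_arrangement.
  by rewrite subn0 /bump leqNgt index_mem xw.
have new_index := index_insert_max_new arr_w 0; rewrite subn0 in new_index.
rewrite mem_insert_max => /orP [i_in | /eqP ->]; last first.
  move=> _; split=> j.
    by move=> lt_wj; rewrite new_index (index_out arr') size_insert_max //; lia.
  by rewrite (mem_arrangement arr') size_insert_max; lia.
rewrite old_index // => /(free_w i i_in) [no_a all_a]; split.
  move=> j ij; have [-> | jn] := eqVneq j (size w).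
    by rewrite new_index; move: i_in; rewrite -index_mem => /ltn_trans/[apply]; rewrite ltnn.
  rewrite index_insert_max // subn0 => lt_ji; apply: no_a ij _.
  by move: lt_ji i_in; rewrite -index_mem /bump; case: leqP => /=; lia.
move=> j; rewrite mem_insert_max => /orP [j_in | /eqP -> //].
by rewrite old_index //; apply: all_a.
Qed.

Lemma tail_free_insert_out {t} : ~~ a (size w) -> tail_free w t -> t <= size w ->
  tail_free (insert_max t w) (maxn t 1).
Proof.
move=> a_max free_w le_tw i.
have arr' := arrangement_insert_max arr_w t.
have new_index := index_insert_max_new arr_w t.
have tail_index x : x \in w -> (size w).+1 - maxn t 1 <= index x (insert_max t w) ->
    t != 0 /\ size w - t <= index x w.
  rewrite mem_arrangement // => xw; rewrite index_insert_max ?neq_ltn ?xw // /bump.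
  by move: (xw); rewrite -(index_arrangement_lt arr_w); case: leqP; lia.
rewrite size_insert_max mem_insert_max => /orP [i_in | /eqP ->]; last first.
  move=> _; split=> j.
    by move=> lt_wj; rewrite new_index (index_out arr') size_insert_max //; lia.
  by rewrite (mem_arrangement arr') size_insert_max; lia.
move=> /(tail_index i i_in) [t0 /(free_w i i_in) [no_a all_a]]; split.
  move=> j ij; have [-> // | jn] := eqVneq j (size w).
  rewrite !index_insert_max ?ltn_bump2 //; first exact: no_a ij.
  by rewrite neq_ltn -mem_arrangement // i_in.
move=> j; rewrite mem_insert_max => /orP [j_in | /eqP ->]; last by rewrite new_index; lia.
by move=> /(tail_index j j_in) [_]; apply: all_a.
Qed.

End Validity.

Lemma filter_insert_max2 t t' w : arrangement w ->
  [seq x <- insert_max t' (insert_max t w) | x < size w] = w.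
Proof.
move=> arr_w; rewrite -(filter_ltn_filter _ (leqnSn (size w))).
rewrite -[(size w).+1](size_insert_max t w) filter_insert_max ?arrangement_insert_max //.
exact: filter_insert_max.
Qed.

(** * A family of valid words *)

Lemma flatten_map_uniq {T U V : eqType} (F : T -> seq U) (key : U -> V) (h : T -> V)
    (s : seq T) :
  uniq (map h s) -> (forall x, x \in s -> uniq (F x) /\ {in F x, forall y, key y = h x}) ->
  uniq (flatten (map F s)).
Proof.
elim: s => [// | x s IH] /= /andP [hx_notin uniq_s] spec_s.
rewrite cat_uniq IH ?andbT //; last by move=> y ys; apply: spec_s; rewrite inE ys orbT.
have [uniq_x key_x] := spec_s x (mem_head x s).
rewrite uniq_x /=; apply/hasP => -[y /flatten_mapP [z zs yz] yx].
have /spec_s [_ key_z] : z \in x :: s by rewrite inE zs orbT.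
by move: hx_notin; rewrite -(key_x y yx) (key_z y yz) map_f.
Qed.

Definition slots (L : nat) : seq nat := [seq maxn t 1 | t <- iota 0 L.+2] ++ nseq L 1.

(* One pair of insertions into [w] with [L] free gaps: either the first new
   element goes last and the second into any of the then [L + 2] free gaps, or
   the first goes into one of the other [L] free gaps and the second goes last.
   The second component is the number of free gaps left, as in [slots]. *)
Definition children (w : seq nat) (L : nat) : seq (seq nat * nat) :=
  [seq (insert_max t (insert_max 0 w), maxn t 1) | t <- iota 0 L.+2] ++
  [seq (insert_max 0 (insert_max t w), 1) | t <- iota 1 L].

Fixpoint extensions (k : nat) (w : seq nat) (L : nat) : seq (seq nat) :=
  if k is k'.+1 then flatten [seq extensions k' v.1 v.2 | v <- children w L] else [:: w].

Fixpoint ext_count (k L : nat) : nat :=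
  if k is k'.+1 then sumn [seq ext_count k' s | s <- slots L] else 1.

Lemma extensionsS k w L :
  extensions k.+1 w L = flatten [seq extensions k v.1 v.2 | v <- children w L].
Proof. by []. Qed.

Lemma ext_countS k L : ext_count k.+1 L = sumn [seq ext_count k s | s <- slots L].
Proof. by []. Qed.

Lemma map_snd_children w L : map snd (children w L) = slots L.
Proof.
rewrite map_cat -!map_comp; congr (_ ++ _).
rewrite -[L in RHS](size_iota 1 L) -(size_map (fun=> 1) (iota 1 L)).
by apply/all_pred1P/allP => _ /mapP [t _ ->].
Qed.

Lemma size_extensions k w L : size (extensions k w L) = ext_count k L.
Proof.
elim: k w L => [// | k IH] w L.
rewrite extensionsS ext_countS size_flatten /shape -map_comp -(map_snd_children w) -map_comp.
by congr sumn; apply: eq_map => v /=; rewrite IH.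
Qed.

Section Children.

Context {w : seq nat} {L : nat} (arr_w : arrangement w) (le_Lw : L <= size w).

Lemma children_arrangement {v} : v \in children w L ->
  [/\ arrangement v.1, size v.1 = (size w).+2, [seq x <- v.1 | x < size w] = w
    & v.2 <= size v.1].
Proof.
rewrite mem_cat => /orP [] /mapP [t]; rewrite mem_iota => /andP [_ lt_t] -> /=.
all: rewrite !arrangement_insert_max ?filter_insert_max2 ?size_insert_max //.
all: split=> //; lia.
Qed.

Lemma children_uniq : uniq (map fst (children w L)).
Proof.
have arr0 := arrangement_insert_max arr_w 0.
rewrite map_cat -!map_comp cat_uniq; apply/and3P; split.
- rewrite map_inj_in_uniq ?iota_uniq // => t1 t2.
  rewrite !mem_iota /=; move=> lt1 lt2 /(insert_max_inj arr0); apply;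
    rewrite size_insert_max; lia.
- apply/hasPn => y /mapP [t]; rewrite mem_iota => /andP [t_gt0 lt_t] ->.
  apply/mapP => -[t' _ /= /(congr1 (filter (fun x => x < (size w).+1)))].
  rewrite -[(size w).+1](size_insert_max 0 w) filter_insert_max //.
  rewrite size_insert_max -[(size w).+1](size_insert_max t w).
  rewrite filter_insert_max ?arrangement_insert_max //.
  move=> eq_t; suff: t = 0 by lia.
  by apply: (insert_max_inj arr_w) eq_t; lia.
- rewrite map_inj_in_uniq ?iota_uniq // => t1 t2.
  rewrite !mem_iota /= => lt1 lt2.
  move/(insert_max_injr (arrangement_insert_max arr_w t1)
         (arrangement_insert_max arr_w t2)).
  by apply: insert_max_inj; lia.
Qed.

End Children.

Lemma extensions_arrangement {k w L z} : arrangement w -> L <= size w ->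
  z \in extensions k w L ->
  [/\ arrangement z, size z = size w + k.*2 & [seq x <- z | x < size w] = w].
Proof.
elim: k w L => [|k IH] w L arr_w le_Lw.
  by rewrite inE addn0 => /eqP ->; rewrite filter_arrangement.
rewrite extensionsS => /flatten_mapP [v v_in z_in].
have [arr_v size_v filter_v le_v] := children_arrangement arr_w le_Lw v_in.
have [arr_z size_z filter_z] := IH _ _ arr_v le_v z_in.
split=> //; first by rewrite size_z size_v doubleS; lia.
have le_wv : size w <= size v.1 by rewrite size_v; lia.
by rewrite -(filter_ltn_filter z le_wv) filter_z filter_v.
Qed.

Lemma extensions_uniq k w L : arrangement w -> L <= size w -> uniq (extensions k w L).
Proof.
elim: k w L => [// | k IH] w L arr_w le_Lw.
rewrite extensionsS.
apply: (flatten_map_uniq _ (fun z => [seq x <- z | x < (size w).+2]) _ _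
  (children_uniq arr_w le_Lw)).
move=> v v_in; have [arr_v size_v _ le_v] := children_arrangement arr_w le_Lw v_in.
split; first exact: IH.
by move=> z /(extensions_arrangement arr_v le_v) [_ _]; rewrite size_v.
Qed.

Section ExtensionsValid.

Variable a : nat -> bool.

Lemma children_valid {w L v} : arrangement w -> L <= size w ->
  a (size w) -> ~~ a (size w).+1 -> valid_word a w -> tail_free a w L ->
  v \in children w L -> valid_word a v.1 /\ tail_free a v.1 v.2.
Proof.
move=> arr_w le_Lw a_in a_out valid_w free_w.
rewrite mem_cat => /orP [] /mapP [t]; rewrite mem_iota => /andP [_ lt_t] -> /=.
- set u := insert_max 0 w.
  have arr_u : arrangement u := arrangement_insert_max arr_w 0.
  have size_u : size u = (size w).+1 := size_insert_max 0 w.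
  have valid_u : valid_word a u := valid_insert_max a arr_w valid_w (tail_free0 a) (leq0n _).
  have free_u : tail_free a u L.+1 := tail_free_insert_in a arr_w a_in free_w le_Lw.
  have free_ut : tail_free a u t by apply: tail_free_le free_u; lia.
  split; first by apply: valid_insert_max; rewrite ?size_u //; lia.
  by apply: tail_free_insert_out; rewrite ?size_u //; lia.
- set u := insert_max t w.
  have arr_u : arrangement u := arrangement_insert_max arr_w t.
  have size_u : size u = (size w).+1 := size_insert_max t w.
  have valid_u : valid_word a u.
    by apply: (valid_insert_max a arr_w valid_w (tail_free_le a _ free_w)); lia.
  split; first exact: (valid_insert_max a arr_u valid_u (tail_free0 a) (leq0n _)).
  by apply: (tail_free_insert_out a arr_u) (tail_free0 a) (leq0n _); rewrite size_u.
Qed.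

Lemma extensions_valid {k w L} : arrangement w -> L <= size w -> ~~ odd (size w) ->
  (forall j, size w <= j < size w + k.*2 -> a j = ~~ odd j) ->
  valid_word a w -> tail_free a w L ->
  forall z, z \in extensions k w L -> valid_word a z.
Proof.
elim: k w L => [|k IH] w L arr_w le_Lw even_w alt valid_w free_w z.
  by rewrite inE => /eqP ->.
rewrite extensionsS => /flatten_mapP [v v_in].
have [arr_v size_v _ le_v] := children_arrangement arr_w le_Lw v_in.
have a_in : a (size w) by rewrite alt ?even_w // leqnn /= doubleS; lia.
have a_out : ~~ a (size w).+1 by rewrite alt /= ?negbK ?(negbTE even_w) // doubleS; lia.
have [valid_v free_v] := children_valid arr_w le_Lw a_in a_out valid_w free_w v_in.
apply: IH => //; rewrite size_v /= ?negbK //.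
by move=> j range_j; apply: alt; rewrite doubleS; lia.
Qed.

End ExtensionsValid.

(** * Counting *)

Lemma ext_count_rec k L :
  ext_count k.+1 L.+1 = ext_count k.+1 L + ext_count k 1 + ext_count k L.+2.
Proof.
rewrite !ext_countS /slots -[L.+3]addn1 iotaD !map_cat !sumn_cat !map_nseq !sumn_nseq.
by rewrite add0n /= (_ : maxn L.+2 1 = L.+2); lia.
Qed.

Lemma ext_count0 k : ext_count k.+1 0 = (ext_count k 1).*2.
Proof. by rewrite ext_countS /slots /= addn0 addnn. Qed.

Lemma ext_count_defect k L :
  (ext_count k L).*2 + ext_count k 1 <= ext_count k L.+2 + 2 ^ L.+1 * 4 ^ k.
Proof.
elim: k L => [|k IH] L; first by rewrite /= muln1 expnS; have := expn_gt0 2 L; lia.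
elim: L => [|L IHL].
  rewrite (ext_count_rec k 1) (ext_count_rec k 0) ext_count0.
  by have := IH 1; rewrite !expnS expn0; lia.
rewrite (ext_count_rec k L) (ext_count_rec k L.+2).
have := IH L.+2; move: IHL; rewrite !expnS; lia.
Qed.

Lemma ext_count_growth k :
  4 * ext_count k.+1 1 + 4 * ext_count k 1 <= ext_count k.+2 1 + 4 ^ k.+1.
Proof.
rewrite (ext_count_rec k.+1 0) ext_count0 (ext_count_rec k 1).
by have := ext_count_defect k 1; rewrite !expnS expn0; lia.
Qed.

(** * From words to the orders of [D_X (B n)] *)

Lemma arrangement_iter_insert_max0 d {w} : arrangement w ->
  arrangement (iter d (insert_max 0) w) /\ size (iter d (insert_max 0) w) = size w + d.
Proof.
move=> arr_w; elim: d => [|d [arr_d size_d]] /=; first by rewrite addn0.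
by rewrite arrangement_insert_max // size_insert_max size_d addnS.
Qed.

Lemma valid_iter_insert_max0 a d w : arrangement w -> valid_word a w ->
  valid_word a (iter d (insert_max 0) w).
Proof.
move=> arr_w valid_w; elim: d => [// | d IH] /=.
have [arr_d _] := arrangement_iter_insert_max0 d arr_w.
exact: (valid_insert_max a arr_d IH (tail_free0 a) (leq0n _)).
Qed.

Lemma iter_insert_max0_injr d w1 w2 : arrangement w1 -> arrangement w2 ->
  iter d (insert_max 0) w1 = iter d (insert_max 0) w2 -> w1 = w2.
Proof.
move=> arr1 arr2; elim: d => [// | d IH] /= eq_d; apply: IH.
apply: insert_max_injr eq_d.
- exact: (arrangement_iter_insert_max0 d arr1).1.
- exact: (arrangement_iter_insert_max0 d arr2).1.
Qed.

Definition inB n (x : nat) : bool :=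
  (x.+1 == 2) || [&& odd x.+1, 3 <= x.+1 & x.+1 <= n - 2].

Lemma mem_B n (x : 'I_n) : (x \in B n) = inB n x.
Proof. by rewrite inE. Qed.

Lemma inB_alternates n j : 2 <= j -> odd j || (j.+3 <= n) -> inB n j = ~~ odd j.
Proof. by rewrite /inB /=; case: (odd j) => /=; lia. Qed.

(* The fallback values are never used when [w] is an arrangement of size [n]. *)
Definition perm_of_word n (w : seq nat) : {perm 'I_n} :=
  if injectiveP (fun x : 'I_n => insubd x (index (val x) w)) is ReflectT inj
  then perm inj else 1%g.

Section PermOfWord.

Context {n : nat} {w : seq nat} (arr_w : arrangement w) (size_w : size w = n).

Lemma perm_of_wordE (x : 'I_n) : val (perm_of_word n w x) = index (val x) w.
Proof.
have rank_lt (y : 'I_n) : index (val y) w < n.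
  by move: (ltn_ord y) (index_arrangement_lt arr_w y); rewrite size_w => ->.
rewrite /perm_of_word; case: injectiveP => [inj | ninj].
  by rewrite permE val_insubd rank_lt.
case: ninj => y z /(congr1 val); rewrite !val_insubd !rank_lt => eq_yz.
by apply/val_inj/(index_inj 0 _ _ eq_yz); rewrite mem_arrangement // size_w ltn_ord.
Qed.

Lemma perm_of_word_D_X : valid_word (inB n) w -> perm_of_word n w \in D_X (B n).
Proof.
move=> valid_w; rewrite inE.
apply/forallP => i; apply/forallP => j; apply/forallP => k; apply/implyP => /andP [ij jk].
have := valid_w i j k ij jk; rewrite size_w ltn_ord mem_B => /(_ isT).
by rewrite /ranked_last /ranked_first !perm_of_wordE.
Qed.

End PermOfWord.

Lemma perm_of_word_inj n w1 w2 : arrangement w1 -> arrangement w2 ->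
  size w1 = n -> size w2 = n -> perm_of_word n w1 = perm_of_word n w2 -> w1 = w2.
Proof.
move=> arr1 arr2 size1 size2 eq12.
apply: (@eq_from_nth _ 0); first by rewrite size1 size2.
move=> i lt_i; set x := nth 0 w1 i.
have lt_xn : x < n by rewrite -size1 -mem_arrangement ?mem_nth.
have := perm_of_wordE arr1 size1 (Ordinal lt_xn).
rewrite eq12 perm_of_wordE //= index_uniq ?arrangement_uniq // => <-.
by rewrite nth_index // mem_arrangement // size2.
Qed.

Lemma card_D_X_ge n (ws : seq (seq nat)) : uniq ws ->
  (forall w, w \in ws -> [/\ arrangement w, size w = n & valid_word (inB n) w]) ->
  size ws <= #|D_X (B n)|.
Proof.
move=> uniq_ws ws_spec; rewrite cardE -(size_map (perm_of_word n)).
apply: uniq_leq_size.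
  rewrite map_inj_in_uniq // => w1 w2 /ws_spec [arr1 size1 _] /ws_spec [arr2 size2 _].
  exact: perm_of_word_inj.
move=> q /mapP [w /ws_spec [arr_w size_w valid_w] ->].
by rewrite mem_enum; apply: perm_of_word_D_X.
Qed.

Lemma start_tail_free a : tail_free a [:: 0; 1] 1.
Proof.
move=> i; rewrite !inE => /orP [] /eqP -> //= _.
by split=> -[|[|j]].
Qed.

Lemma card_D_X_ge_ext_count n : 3 <= n -> ext_count ((n - 3)./2) 1 <= #|D_X (B n)|.
Proof.
move=> le3n; set k := (n - 3)./2.
have range_k : (k.*2).+3 <= n <= (k.*2).+4 by move: (odd_double_half (n - 3)); lia.
(* The extensions have size n - 2 or n - 1 and are completed by appending the
   remaining maxima at the end. *)
set pad := iter (n - (k.*2).+2) (insert_max 0).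
have arr0 : arrangement [:: 0; 1] by [].
have valid0 : valid_word (inB n) [:: 0; 1] by move=> i j l /=; lia.
rewrite -(size_extensions k [:: 0; 1]) -(size_map pad).
have ext_spec z := @extensions_arrangement k [:: 0; 1] 1 z arr0 isT.
apply: card_D_X_ge => [|_ /mapP [z z_in ->]].
  rewrite map_inj_in_uniq ?extensions_uniq // => z1 z2 z1_in z2_in.
  have [arr1 _ _] := ext_spec z1 z1_in; have [arr2 _ _] := ext_spec z2 z2_in.
  exact: iter_insert_max0_injr.
have [arr_z size_z _] := ext_spec z z_in.
have [arr_pad size_pad] := arrangement_iter_insert_max0 (n - (k.*2).+2) arr_z.
split=> //; first by rewrite size_pad size_z /=; lia.
apply: valid_iter_insert_max0 => //.
apply: (extensions_valid (inB n) (L := 1) arr0 isT isT _ valid0 (start_tail_free _) z z_in).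
move=> j /= range_j.
by apply: inB_alternates; [lia | case: (odd j) (odd_double_half j) => //=; lia].
Qed.

(** * Growth *)

Local Open Scope ring_scope.

Lemma two_term_recurrence_lower_bound (R : numDomainType) (p q lam c : R)
    (y : nat -> R) :
  0 <= p -> 0 <= q -> lam ^+ 2 = p * lam + q ->
  (forall k, p * y k.+1 + q * y k <= y k.+2) ->
  c <= y 0%N -> c * lam <= y 1%N -> forall k, c * lam ^+ k <= y k.
Proof.
move=> p_ge0 q_ge0 lam2 rec y0 y1.
suff bound2 k : c * lam ^+ k <= y k /\ c * lam ^+ k.+1 <= y k.+1.
  by move=> k; case: (bound2 k).
elim: k => [|k [IHk IHk1]]; first by rewrite expr0 mulr1 expr1.
split=> //; apply: le_trans (rec k).
have -> : c * lam ^+ k.+2 = p * (c * lam ^+ k.+1) + q * (c * lam ^+ k).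
  by rewrite -addn2 exprD lam2 exprS; ring.
by apply: lerD; apply: ler_wpM2l.
Qed.

Lemma exp_sqrtr_le (R : rcfType) (x : R) n m : 1 <= x -> (n <= m.*2)%N ->
  Num.sqrt x ^+ n <= x ^+ m.
Proof.
move=> x_ge1 le_nm; have sqrt_ge1 : 1 <= Num.sqrt x by rewrite -sqrtr1 ler_sqrt; lra.
rewrite -[x in _ <= x ^+ _]sqr_sqrtr; last by lra.
by rewrite -exprM mul2n; apply: ler_weXn2l.
Qed.

Section Growth.

Variable R : rcfType.

Let lam : R := 2 + 2 * Num.sqrt 2.

Lemma sqrt2_sqr : Num.sqrt (2 : R) * Num.sqrt 2 = 2.
Proof. by rewrite -expr2 sqr_sqrtr //; lra. Qed.

Lemma lam_sqr : lam ^+ 2 = 4 * lam + 4.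
Proof. by rewrite /lam expr2; have := sqrt2_sqr; lra. Qed.

Lemma lam_bounds : 2 <= lam <= 10.
Proof.
have := sqrt2_sqr; have := sqrtr_ge0 (2 : R).
by rewrite /lam => s_ge0 s_sqr; apply/andP; split; nra.
Qed.

Lemma ext_count_lower_bound k : 2 * lam ^+ k <= (ext_count k.+2 1)%:R.
Proof.
(* [ext_count_growth] is the recurrence y_(k+2) >= 4 y_(k+1) + 4 y_k. *)
pose y k : R := (ext_count k.+2 1)%:R - 4 ^+ k.+2.
suff bound_y : forall k, 2 * lam ^+ k <= y k.
  have pow_ge0 : (0 : R) <= 4 ^+ k.+2 by rewrite exprn_ge0.
  by have := bound_y k; rewrite /y; lra.
apply: two_term_recurrence_lower_bound lam_sqr _ _ _ => //.
- move=> j; rewrite /y; move: (ext_count_growth j.+2).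
  move: (ext_count j.+2 1) (ext_count j.+3 1) (ext_count j.+4 1) => c2 c3 c4.
  rewrite -(ler_nat R) 2!natrD 2!natrM natrX !(exprS 4 j.+3) !(exprS 4 j.+2).
  lra.
- by rewrite /y (_ : ext_count 2 1 = 18%N) //; lra.
- by rewrite /y (_ : ext_count 3 1 = 84%N) //; have := lam_bounds; lra.
Qed.

End Growth.

Theorem proposition12 (R : rcfType) :
  exists2 C : R, 0 < C &
    exists N : nat, forall n : nat, (N <= n)%N ->
      C * Num.sqrt (2 + 2 * Num.sqrt 2) ^+ n <= (#|D_X (B n)|)%:R.
Proof.
set lam : R := 2 + 2 * Num.sqrt 2.
have /andP [lam_ge2 _] : 2 <= lam <= 10 := lam_bounds R.
have lam4_gt0 : 0 < lam ^+ 4 by rewrite exprn_gt0 //; lra.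
exists (2 / lam ^+ 4); first by rewrite divr_gt0.
exists 7%N => n le7n; set m := ((n - 3)./2)%N.
have /andP [le2m le_n] : (2 <= m)%N && (n <= (m + 2).*2)%N.
  by move: (odd_double_half (n - 3)); lia.
have card_ge : 2 * lam ^+ (m - 2) <= #|D_X (B n)|%:R.
  apply: le_trans (ext_count_lower_bound R (m - 2)) _.
  rewrite ler_nat (_ : (m - 2).+2 = m)%N; last by lia.
  by apply: card_D_X_ge_ext_count; lia.
apply: le_trans card_ge.
have -> : 2 * lam ^+ (m - 2) = 2 / lam ^+ 4 * lam ^+ (m + 2).
  rewrite (_ : (m + 2 = (m - 2) + 4)%N); last by lia.
  by rewrite exprD; field; apply: lt0r_neq0; lra.
apply: ler_wpM2l; first by rewrite divr_ge0 // ltW.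
by apply: exp_sqrtr_le => //; lra.
Qed.
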